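(* Let $g$, $r_c$ and the global frame $\vec E$ be as in the context. Let $(s,\vec r)$ be a molecule with $N$ atoms and pairwise distinct positions. If there exist $\vec t\in\mathbb{R}^{1\times3}$ and $o\in\mathrm{O}(3)$ with $o\neq I$ such that $$\{(s_i,\vec r_i-\vec t): i=1,\dots,N\}=\{(s_i,(\vec r_i-\vec t)o^T): i=1,\dots,N\},$$ then $\mathrm{rank}(\vec E(s,\vec r))<3$.
   Context: $s\in\mathbb{R}^{N\times d}$ and $\vec r\in\mathbb{R}^{N\times3}$ have rows $s_i$ and $\vec r_i\in\mathbb{R}^{1\times 3}$. $\mathrm{O}(3)=\{Q\in\mathbb{R}^{3\times3}:QQ^T=I\}$. A local environment is a finite set of pairs $(s',x)$ with $s'\in\mathbb{R}^d$, $x\in\mathbb{R}^{1\times 3}$. $g$ is a function from local environments to $\mathbb{R}^{F\times 3}$ with $g(\{(s',xo^T):(s',x)\in A\})=g(A)o^T$ for all $o\in\mathrm{O}(3)$ and all $A$. With cutoff $r_c>0$, the local frames are $\vec E_i(s,\vec r)=g(\{(s_j,\vec r_i-\vec r_j): \|\vec r_i-\vec r_j\|<r_c\})$ and the global frame is $\vec E(s,\vec r)=\sum_{i=1}^N\vec E_i(s,\vec r)$. *)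

From HB Require Import structures.
From mathcomp Require Import all_boot all_order all_algebra finmap.
From mathcomp Require Import reals.
Set Implicit Arguments. Unset Strict Implicit. Unset Printing Implicit Defensive.
Import Order.TTheory GRing.Theory Num.Theory.
Local Open Scope ring_scope.
Local Open Scope fset_scope.

Definition enorm {R : realType} (v : 'rV[R]_3) : R :=
  Num.sqrt (\sum_(k < 3) v 0 k ^+ 2).

Definition orthogonal3 {R : realType} (Q : 'M[R]_3) : Prop := Q *m Q^T = 1%:M.

Definition local_env (R : realType) (d : nat) := {fset ('rV[R]_d * 'rV[R]_3)}.

Definition env_act {R : realType} {d : nat} (o : 'M[R]_3) (A : local_env R d)
  : local_env R d := [fset (p.1, p.2 *m o^T) | p in A].

Definition equivariant {R : realType} {d F : nat}
  (g : local_env R d -> 'M[R]_(F, 3)) : Prop :=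
  forall (o : 'M[R]_3) (A : local_env R d), orthogonal3 o ->
    g (env_act o A) = g A *m o^T.

Definition local_frame {R : realType} {d F N : nat}
  (g : local_env R d -> 'M[R]_(F, 3)) (rc : R)
  (s : 'M[R]_(N, d)) (r : 'M[R]_(N, 3)) (i : 'I_N) : 'M[R]_(F, 3) :=
  g [fset (row j s, row i r - row j r) | j in 'I_N & enorm (row i r - row j r) < rc].

Definition global_frame {R : realType} {d F N : nat}
  (g : local_env R d -> 'M[R]_(F, 3)) (rc : R)
  (s : 'M[R]_(N, d)) (r : 'M[R]_(N, 3)) : 'M[R]_(F, 3) :=
  \sum_(i < N) local_frame g rc s r i.

From HB Require Import structures.
From mathcomp Require Import all_boot all_order all_algebra finmap.
From mathcomp Require Import reals.
Import Order.TTheory GRing.Theory Num.Theory.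
Local Open Scope ring_scope.
Local Open Scope fset_scope.

(* The symmetry (t, o) induces a permutation sigma of the atoms with
   s_{sigma i} = s_i and r_{sigma i} - t = (r_i - t) o^T.  Relative positions
   are then rotated by o, so sigma maps the environment of atom i onto the
   o-rotated environment of atom i, and equivariance gives
   E_{sigma i} = E_i o^T.  Summing over i yields E = E o^T, so every row of E
   lies in the kernel of 1 - o^T, which is nonzero since o <> I. *)

Lemma mulmx_tr_orthogonal3 (R : realType) (o : 'M[R]_3) :
  orthogonal3 o -> o^T *m o = 1%:M.
Proof. exact: mulmx1C. Qed.

Lemma enorm_mulmx_orthogonal3 (R : realType) (o : 'M[R]_3) (v : 'rV[R]_3) :
  orthogonal3 o -> enorm (v *m o^T) = enorm v.
Proof.
move=> ho.
have sumsqE (w : 'rV[R]_3) : \sum_(k < 3) w 0 k ^+ 2 = (w *m w^T) 0 0.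
  by rewrite !mxE; apply: eq_bigr => k _; rewrite !mxE expr2.
rewrite /enorm !sumsqE trmx_mul trmxK -mulmxA (mulmxA o^T).
by rewrite mulmx_tr_orthogonal3 // mul1mx.
Qed.

Lemma imfset_eq_reindex {I : finType} {T : choiceType} {f h : I -> T} :
  [fset f i | i in I] = [fset h i | i in I] ->
  exists sigma : I -> I, forall i, f (sigma i) = h i.
Proof.
move=> fhE; suff /fin_all_exists : forall i, exists j, f j = h i by [].
move=> i.
have : h i \in [fset h i | i in I] by exact: (in_imfset _ h).
by rewrite -fhE => /imfsetP [j _ ->]; exists j.
Qed.

Lemma rank_lt_of_mulmx_fixed (K : fieldType) (m n : nat)
    (A : 'M[K]_(m, n)) (Q : 'M[K]_n) :
  A *m Q = A -> Q != 1%:M -> (\rank A < n)%N.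
Proof.
move=> AQ Q1.
have : A *m (1%:M - Q) = 0 by rewrite mulmxBr mulmx1 AQ subrr.
move/mulmx0_rank_max; have : \rank (1%:M - Q) != 0%N.
  by rewrite mxrank_eq0 subr_eq0 eq_sym.
by case: (\rank _) => // k _; rewrite addnS; apply: leq_trans; rewrite ltnS leq_addr.
Qed.

Section SymmetricMolecule.

Context {R : realType} {d F N : nat}.
Context {g : local_env R d -> 'M[R]_(F, 3)} {rc : R}.
Context {s : 'M[R]_(N, d)} {r : 'M[R]_(N, 3)} {t : 'rV[R]_3} {o : 'M[R]_3}.
Context {sigma : 'I_N -> 'I_N}.

Hypothesis g_equivariant : equivariant g.
Hypothesis o_orthogonal : orthogonal3 o.
Hypothesis r_inj : injective (fun i : 'I_N => row i r).
Hypothesis sigma_species : forall i, row (sigma i) s = row i s.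
Hypothesis sigma_position : forall i, row (sigma i) r - t = (row i r - t) *m o^T.

Lemma sigma_relative_position i j :
  row (sigma i) r - row (sigma j) r = (row i r - row j r) *m o^T.
Proof.
have shiftE (u v : 'rV[R]_3) : u - v = (u - t) - (v - t) by rewrite opprB addrA subrK.
by rewrite shiftE !sigma_position -mulmxBl -shiftE.
Qed.

Lemma sigma_inj : injective sigma.
Proof.
move=> i j eq_ij; apply: r_inj => /=; apply/eqP; rewrite -subr_eq0.
have := sigma_relative_position i j; rewrite eq_ij subrr => /esym/(congr1 (mulmx^~ o)).
by rewrite mul0mx -mulmxA mulmx_tr_orthogonal3 // mulmx1 => ->.
Qed.

Lemma local_frame_sigma i :
  local_frame g rc s r (sigma i) = local_frame g rc s r i *m o^T.
Proof.
rewrite /local_frame -g_equivariant //; congr g; apply/fsetP => x.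
apply/imfsetP/imfsetP => [[j /= near_j ->] | [p /imfsetP [j /= near_j ->] ->]].
- have /codomP [k jE] : j \in codom sigma by rewrite (inj_card_onto sigma_inj).
  subst j.
  exists (row k s, row i r - row k r).
    by apply: (in_imfset _ (fun k => (row k s, row i r - row k r))); move: near_j;
      rewrite !inE /= sigma_relative_position enorm_mulmx_orthogonal3.
  by rewrite sigma_species sigma_relative_position.
- exists (sigma j); last by rewrite sigma_species sigma_relative_position.
  by move: near_j; rewrite !inE sigma_relative_position enorm_mulmx_orthogonal3.
Qed.

Lemma global_frame_sigma_fixed :
  global_frame g rc s r *m o^T = global_frame g rc s r.
Proof.
rewrite /global_frame mulmx_suml [RHS](reindex_inj sigma_inj).
by apply: eq_bigr => i _; rewrite local_frame_sigma.
Qed.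

End SymmetricMolecule.

Theorem proposition10 (R : realType) (d F N : nat)
  (g : local_env R d -> 'M[R]_(F, 3)) (rc : R)
  (s : 'M[R]_(N, d)) (r : 'M[R]_(N, 3)) :
  equivariant g -> 0 < rc ->
  injective (fun i : 'I_N => row i r) ->
  (exists (t : 'rV[R]_3) (o : 'M[R]_3),
      orthogonal3 o /\ o != 1%:M /\
      [fset (row i s, row i r - t) | i in 'I_N] =
      [fset (row i s, (row i r - t) *m o^T) | i in 'I_N]) ->
  (\rank (global_frame g rc s r) < 3)%N.
Proof.
move=> g_eq _ r_inj [t [o [o_orth [o_ne1 symE]]]].
have [sigma sigmaE] := imfset_eq_reindex symE.
have fixedE := global_frame_sigma_fixed (rc := rc) g_eq o_orth r_inj
  (fun i => congr1 fst (sigmaE i)) (fun i => congr1 snd (sigmaE i)).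
apply: rank_lt_of_mulmx_fixed fixedE _.
by apply: contra o_ne1 => /eqP oT1; rewrite -(trmxK o) oT1 trmx1.
Qed.
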